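(* Let $C$ be a choice function. Then $C$ is consistent if and only if $\emptyset\notin\mathrm{Ex}(\mathcal{A}_C)$. Moreover, if $C$ is consistent, then $C_{\mathrm{Ex}(\mathcal{A}_C)}(A)=\mathrm{Ex}(C)(A)$ for all $A\in\mathscr{Q}$.
   Context: Let $\mathcal{X}$ be a nonempty set and let $\mathscr{V}$ be the real vector space of all functions $u:\mathcal{X}\to\mathbb{R}$ (options), with pointwise operations. For $u,v\in\mathscr{V}$, $u\le v$ iff $u(x)\le v(x)$ for all $x\in\mathcal{X}$, and $u<v$ iff $u\le v$ and $u\neq v$. Let $\mathscr{V}_{>0}=\{u\in\mathscr{V}:0<u\}$ and $\mathscr{V}^s_{>0}=\{\{u\}:u\in\mathscr{V}_{>0}\}$. Let $\mathscr{Q}$ be the set of all finite subsets of $\mathscr{V}$ (including $\emptyset$). For $A\in\mathscr{Q}$ and $u\in\mathscr{V}$, $A-u=\{v-u:v\in A\}$. For a positive integer $n$, $\mathbb{R}^{n,+}=\{\boldsymbol\lambda\in\mathbb{R}^n:\lambda_j\ge0\ \forall j,\ \sum_j\lambda_j>0\}$, and for $\boldsymbol\lambda\in\mathbb{R}^n$, $\mathbf u=(u_1,\dots,u_n)\in\mathscr{V}^n$, $\boldsymbol\lambda\mathbf u=\sum_{j=1}^n\lambda_ju_j$. A choice function is a map $C:\mathscr{Q}\to\mathscr{Q}$ with $C(A)\subseteq A$ for all $A$; its rejection function is $R_C(A)=A\setminus C(A)$, and $K_C=\{A\in\mathscr{Q}:0\notin C(A\cup\{0\})\}$. $C$ is coherent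 if: (C0) $C(A)\neq\emptyset$ for all nonempty $A\in\mathscr{Q}$; (C1) for all $A\in\mathscr{Q}$ and $u\in A$: $u\in C(A)\iff 0\in C(A-u)$; (C2) $\{u\}\in K_C$ for all $u\in\mathscr{V}_{>0}$; (C3) for all $A,B\in K_C$ and all maps $\boldsymbol\lambda:A\times B\to\mathbb{R}^{2,+}$, $\{\boldsymbol\lambda(\mathbf u)\mathbf u:\mathbf u\in A\times B\}\in K_C$; (C4) $A\subseteq B\Rightarrow R_C(A)\subseteq R_C(B)$ for all $A,B\in\mathscr{Q}$. $\mathcal{C}$ denotes the set of coherent choice functions. For a choice function $C$, $\mathcal C_C=\{C'\in\mathcal C: C'(A)\subseteq C(A)\text{ for all }A\in\mathscr{Q}\}$; $C$ is called consistent if $\mathcal C_C\neq\emptyset$; and $\mathrm{Ex}(C)(A)=\bigcup_{C'\in\mathcal C_C}C'(A)$ for all $A\in\mathscr{Q}$ (an empty union being $\emptyset$). A set of desirable option sets is any $K\subseteq\mathscr{Q}$. It is coherent if for all $A,B\in K$: (K0) $A\setminus\{0\}\in K$; (K1) $\{0\}\notin K$; (K2) $\mathscr{V}^s_{>0}\subseteq K$; (K3) $\{\boldsymbol\lambda(\mathbf u)\mathbf u:\mathbf u\in A\times B\}\in K$ for every map $\boldsymbol\lambda:A\times B\to\mathbb{R}^{2,+}$; (K4) $A\cup Q\in K$ for all $Q\in\mathscr{Q}$. $\bar{\mathbf K}$ denotes the set of coherent sets of desirable option sets. For $K\subseteq\mathscr{Q}$, the choice function $C_K$ is defined by $C_K(A)=\{u\in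 A:(A-u)\setminus\{0\}\notin K\}$. An assessment is any subset $\mathcal{A}\subseteq\mathscr{Q}$. Let $\bar{\mathbf K}(\mathcal A)=\{K\in\bar{\mathbf K}:\mathcal A\subseteq K\}$ and $\mathrm{Ex}(\mathcal A)=\bigcap\bar{\mathbf K}(\mathcal A)$, with the convention $\bigcap\emptyset=\mathscr{Q}$. For a choice function $C$, $\mathcal A_C=\{C(A)-u:A\in\mathscr{Q},\ u\in R_C(A)\}$. *)

From Stdlib Require Import Reals List.
Open Scope R_scope.

Section Defs.
Variable X : Type.

Definition V := X -> R.
Definition vzero : V := fun _ => 0.
Definition vsub (u v : V) : V := fun x => u x - v x.
Definition vlc (a : R) (u : V) (b : R) (w : V) : V := fun x => a * u x + b * w x.

Definition vle (u v : V) : Prop := forall x, u x <= v x.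
Definition vlt (u v : V) : Prop := vle u v /\ u <> v.
Definition Vpos (u : V) : Prop := vlt vzero u.

(* option sets; Q = finite option sets *)
Definition oset := V -> Prop.
Definition finite_oset (A : oset) : Prop := exists l : list V, forall v, A v <-> In v l.
Definition subset (A B : oset) : Prop := forall v, A v -> B v.
Definition single (u : V) : oset := fun v => v = u.
Definition setU (A B : oset) : oset := fun v => A v \/ B v.
Definition setD (A B : oset) : oset := fun v => A v /\ ~ B v.
Definition shift (A : oset) (u : V) : oset := fun w => exists v, A v /\ w = vsub v u.
Definition empty_oset : oset := fun _ => False.
Definition nonempty (A : oset) : Prop := exists v, A v.

Definition R2plus (a b : R) : Prop := 0 <= a /\ 0 <= b /\ 0 < a + b.

(* {lambda(u) u : u in A x B}, lambda given by two real coordinate maps *)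
Definition combo (A B : oset) (l1 l2 : V -> V -> R) : oset :=
  fun w => exists u v, A u /\ B v /\ w = vlc (l1 u v) u (l2 u v) v.

(* choice functions: only their values on Q matter *)
Definition choice_fun (C : oset -> oset) : Prop :=
  forall A, finite_oset A -> subset (C A) A.
Definition rej (C : oset -> oset) (A : oset) : oset := setD A (C A).
Definition KC (C : oset -> oset) (A : oset) : Prop :=
  finite_oset A /\ ~ C (setU A (single vzero)) vzero.

Definition coherent_choice (C : oset -> oset) : Prop :=
  choice_fun C /\
  (* C0 *) (forall A, finite_oset A -> nonempty A -> nonempty (C A)) /\
  (* C1 *) (forall A u, finite_oset A -> A u -> (C A u <-> C (shift A u) vzero)) /\
  (* C2 *) (forall u, Vpos u -> KC C (single u)) /\
  (* C3 *) (forall A B (l1 l2 : V -> V -> R), KC C A -> KC C B ->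
              (forall u v, A u -> B v -> R2plus (l1 u v) (l2 u v)) ->
              KC C (combo A B l1 l2)) /\
  (* C4 *) (forall A B, finite_oset A -> finite_oset B -> subset A B ->
              subset (rej C A) (rej C B)).

Definition dominated (C' C : oset -> oset) : Prop :=
  forall A, finite_oset A -> subset (C' A) (C A).
Definition consistent (C : oset -> oset) : Prop :=
  exists C', coherent_choice C' /\ dominated C' C.
Definition ExC (C : oset -> oset) (A : oset) : oset :=
  fun u => exists C', coherent_choice C' /\ dominated C' C /\ C' A u.

Definition sdos := oset -> Prop.
Definition coherent_K (K : sdos) : Prop :=
  (forall A, K A -> finite_oset A) /\
  (* K0 *) (forall A, K A -> K (setD A (single vzero))) /\
  (* K1 *) ~ K (single vzero) /\
  (* K2 *) (forall u, Vpos u -> K (single u)) /\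
  (* K3 *) (forall A B (l1 l2 : V -> V -> R), K A -> K B ->
              (forall u v, A u -> B v -> R2plus (l1 u v) (l2 u v)) ->
              K (combo A B l1 l2)) /\
  (* K4 *) (forall A Q, K A -> finite_oset Q -> K (setU A Q)).

Definition CK (K : sdos) (A : oset) : oset :=
  fun u => A u /\ ~ K (setD (shift A u) (single vzero)).

(* Ex(assessment) = intersection of coherent K containing it; empty intersection = Q *)
Definition ExA (Asm : sdos) : sdos :=
  fun B => finite_oset B /\ forall K, coherent_K K -> (forall A, Asm A -> K A) -> K B.

Definition AC (C : oset -> oset) : sdos :=
  fun B => exists A u, finite_oset A /\ rej C A u /\ B = shift (C A) u.

End Defs.
Arguments vzero {X}.
Arguments choice_fun {X} C.
Arguments consistent {X} C.
Arguments ExA {X} Asm _.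
Arguments AC {X} C _.
Arguments CK {X} K A _.
Arguments ExC {X} C A _.
Arguments finite_oset {X} A.
Arguments coherent_choice {X} C.
Arguments coherent_K {X} K.

From Stdlib Require Import Reals List.
From Stdlib Require Import Classical FunctionalExtensionality PropExtensionality ClassicalEpsilon Lra.

(* The proof rests on the correspondence between coherent choice functions and
   coherent sets of desirable option sets:
   - K_C' is coherent whenever C' is (KC_coherent), and C' is recovered from
     it: u in C'(A) iff (A-u)\{0} is not in K_C' (choice_via_KC);
   - C_K is coherent whenever K is (CK_coherent).
   The one non-routine ingredient is a rejection lemma for a coherent K: if
   (A-w)\{0} is in K for every w in A\B, then so is (B-u)\{0} whenever
   (A-u)\{0} is and u is in B (K_restrict).  It follows by induction from a
   one-option version proved with axiom K3 (K_drop_option), and yields both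
   axiom C0 for C_K and the fact that a coherent C' below C makes every
   element of A_C desirable for K_C' (AC_in_KC).  Conversely C_K lies below C
   when K contains A_C (CK_dominated).  Since the natural extension is the
   intersection of the coherent supersets of the assessment (ExA_not_mem),
   both parts of the theorem follow by passing between C' and K_C'. *)

Local Arguments shift {X}. Local Arguments setD {X}. Local Arguments single {X}.
Local Arguments setU {X}. Local Arguments subset {X}. Local Arguments combo {X}.
Local Arguments vsub {X}. Local Arguments vlc {X}. Local Arguments KC {X}.
Local Arguments rej {X}. Local Arguments dominated {X}. Local Arguments nonempty {X}.

Section ChoiceAndDesirability.
Variable X : Type.

(* (A - u) \ {0}: the option set whose desirability expresses rejection of u from A. *)
Local Notation centred A u := (setD (shift A u) (single vzero)).

Lemma seteq (A B : oset X) : (forall v, A v <-> B v) -> A = B.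
Proof.
  intros H; apply functional_extensionality; intros v.
  apply propositional_extensionality, H.
Qed.

Lemma vext (u v : V X) : (forall x, u x = v x) -> u = v.
Proof. apply functional_extensionality. Qed.

Lemma vsub_self (u : V X) : vsub u u = vzero.
Proof. apply vext; intros x; unfold vsub, vzero; ring. Qed.

Lemma vsub_eq0 (u v : V X) : vsub v u = vzero -> v = u.
Proof.
  intros E; apply vext; intros x.
  assert (Ex := f_equal (fun f => f x) E); unfold vsub, vzero in Ex; lra.
Qed.

Lemma shift_vzero (A : oset X) : shift A vzero = A.
Proof.
  assert (Hv : forall v : V X, vsub v vzero = v)
    by (intros v; apply vext; intros x; unfold vsub, vzero; ring).
  apply seteq; intros w; split.
  - intros [v [Hv' ->]]; rewrite Hv; exact Hv'.
  - intros Hw; exists w; rewrite Hv; auto.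
Qed.

Lemma fin_sub (A B : oset X) : finite_oset A -> subset B A -> finite_oset B.
Proof.
  intros [l Hl] Hs.
  exists (filter (fun v => if excluded_middle_informative (B v) then true else false) l).
  intros v; rewrite filter_In.
  destruct (excluded_middle_informative (B v)) as [Hv|Hv]; split; intros H.
  - split; [apply Hl, Hs, H | reflexivity].
  - exact Hv.
  - contradiction.
  - destruct H; discriminate.
Qed.

Lemma fin_shift (A : oset X) u : finite_oset A -> finite_oset (shift A u).
Proof.
  intros [l Hl]; exists (map (fun v => vsub v u) l); intros w; rewrite in_map_iff; split.
  - intros [v [Hv ->]]; exists v; split; [reflexivity | apply Hl, Hv].
  - intros [v [<- Hv]]; exists v; split; [apply Hl, Hv | reflexivity].
Qed.

Lemma fin_centred (A : oset X) u : finite_oset A -> finite_oset (centred A u).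
Proof.
  intros HA; apply fin_sub with (shift A u); [apply fin_shift, HA | intros w [Hw _]; exact Hw].
Qed.

Lemma fin_U (A B : oset X) : finite_oset A -> finite_oset B -> finite_oset (setU A B).
Proof.
  intros [la Ha] [lb Hb]; exists (la ++ lb); intros v; unfold setU.
  rewrite Ha, Hb, in_app_iff; tauto.
Qed.

Lemma fin_single (u : V X) : finite_oset (single u).
Proof.
  exists (u :: nil); intros v; simpl; unfold single; split.
  - intros ->; left; reflexivity.
  - intros [->|[]]; reflexivity.
Qed.

Lemma fin_empty : finite_oset (empty_oset X).
Proof. exists nil; simpl; unfold empty_oset; tauto. Qed.

Lemma fin_combo (A B : oset X) l1 l2 :
  finite_oset A -> finite_oset B -> finite_oset (combo A B l1 l2).
Proof.
  intros [la Ha] [lb Hb].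
  exists (map (fun p => vlc (l1 (fst p) (snd p)) (fst p) (l2 (fst p) (snd p)) (snd p))
              (list_prod la lb)).
  intros w; rewrite in_map_iff; split.
  - intros (u & v & Hu & Hv & ->); exists (u, v); split; [reflexivity|].
    apply in_prod; [apply Ha | apply Hb]; assumption.
  - intros ([u v] & <- & Hp); apply in_prod_iff in Hp as [Hu Hv].
    exists u, v; simpl; repeat split; [apply Ha | apply Hb]; auto.
Qed.

Lemma K_superset (K : sdos X) : coherent_K K ->
  forall A Q, K A -> finite_oset Q -> subset A Q -> K Q.
Proof.
  intros (_&_&_&_&_&K4) A Q HA HQ Hs.
  replace Q with (setU A Q) by (apply seteq; intros v; unfold setU; intuition).
  apply K4; assumption.
Qed.

(* By upward closure, K1 forbids the empty option set. *)
Lemma K_no_empty (K : sdos X) : coherent_K K -> ~ K (empty_oset X).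
Proof.
  intros HK H; apply (proj1 (proj2 (proj2 HK))).
  apply (K_superset K HK (empty_oset X)); [exact H | apply fin_single | intros v []].
Qed.

(* Combine a in (A-u)\{0} with b in (A-v)\{0}
   by a + [a = v-u] b: if a = v-u the result is b + (v-u) in (A\{v}) - u,
   otherwise it is a itself, again in (A\{v}) - u. *)
Lemma K_drop_option (K : sdos X) (HK : coherent_K K) A u v :
  finite_oset A -> u <> v -> K (centred A u) -> K (centred A v) ->
  K (centred (setD A (single v)) u).
Proof.
  intros HA Huv Hu Hv; pose proof HK as (_&K0&_&_&K3&_).
  set (l1 := fun (_ _ : V X) => 1).
  set (l2 := fun (a _ : V X) => if excluded_middle_informative (a = vsub v u) then 1 else 0).
  assert (Hc : K (combo (centred A u) (centred A v) l1 l2)).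
  { apply K3; auto; intros a b _ _; unfold R2plus, l1, l2.
    destruct (excluded_middle_informative _); lra. }
  apply K0 in Hc; eapply K_superset; [exact HK | exact Hc | |].
  { apply fin_centred, fin_sub with A; [exact HA | intros w [Hw _]; exact Hw]. }
  intros w [(a & b & [[wa [HwaA Ea]] Ha0] & [[wb [HwbA Eb]] Hb0] & ->) Hw0].
  split; [| exact Hw0]; unfold l1, l2, single in *.
  destruct (excluded_middle_informative (a = vsub v u)) as [E|E].
  - exists wb; split.
    + split; [exact HwbA|]; intros ->; apply Hb0; rewrite Eb; apply vsub_self.
    + rewrite E, Eb; apply vext; intros x; unfold vlc, vsub; ring.
  - exists wa; split.
    + split; [exact HwaA|]; intros ->; apply E, Ea.
    + rewrite Ea; apply vext; intros x; unfold vlc, vsub; ring.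
Qed.

Lemma K_restrict_list (K : sdos X) (HK : coherent_K K) u : forall l A B,
  finite_oset A -> subset B A -> (forall w, A w -> ~ B w -> In w l) ->
  (forall w, A w -> ~ B w -> K (centred A w)) ->
  B u -> K (centred A u) -> K (centred B u).
Proof.
  induction l as [|v l IH]; intros A B HA HBA Hin Hrej Hu HKu.
  - replace B with A; [exact HKu|].
    apply seteq; intros w; split; [| apply HBA].
    intros Hw; apply NNPP; intros HnB; exact (Hin w Hw HnB).
  - destruct (classic (A v /\ ~ B v)) as [[HAv HBv]|Hv].
    + assert (Hvu : u <> v) by (intros ->; contradiction).
      apply (IH (setD A (single v)) B).
      * apply fin_sub with A; [exact HA | intros w [Hw _]; exact Hw].
      * intros w Hw; split; [apply HBA, Hw | intros ->; contradiction].
      * intros w [HwA Hwv] HwB; destruct (Hin w HwA HwB) as [->|E];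
          [exfalso; apply Hwv; reflexivity | exact E].
      * intros w [HwA Hwv] HwB; apply K_drop_option; auto.
      * exact Hu.
      * apply K_drop_option; auto.
    + apply (IH A B); auto; intros w HwA HwB.
      destruct (Hin w HwA HwB) as [->|E]; [tauto | exact E].
Qed.

Lemma K_restrict (K : sdos X) (HK : coherent_K K) A B u :
  finite_oset A -> subset B A -> (forall w, A w -> ~ B w -> K (centred A w)) ->
  B u -> K (centred A u) -> K (centred B u).
Proof.
  intros HA HBA; pose proof HA as [l Hl].
  apply (K_restrict_list K HK u l A B HA HBA); intros w Hw _; apply Hl, Hw.
Qed.

Lemma KC_CK (K : sdos X) A : finite_oset A -> KC (CK K) A <-> K (setD A (single vzero)).
Proof.
  intros HA; unfold KC, CK; rewrite shift_vzero.
  replace (setD (setU A (single vzero)) (single vzero)) with (setD A (single vzero))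
    by (apply seteq; intros w; unfold setD, setU; tauto).
  split.
  - intros [_ H]; apply NNPP; intros Hn; apply H; split; [right; reflexivity | exact Hn].
  - intros H; split; [exact HA | intros [_ Hn]; contradiction].
Qed.

(* Axiom C0 for C_K: if every option of A were rejected, K_restrict applied with
   B = {u0} would make (u0-u0)\{0}, the empty set, desirable. *)
Lemma CK_nonempty (K : sdos X) (HK : coherent_K K) A :
  finite_oset A -> nonempty A -> nonempty (CK K A).
Proof.
  intros HA [u0 Hu0]; apply NNPP; intros Hnone.
  assert (Hrej : forall w, A w -> K (centred A w))
    by (intros w Hw; apply NNPP; intros Hn; apply Hnone; exists w; split; auto).
  apply (K_no_empty K HK).
  replace (empty_oset X) with (centred (single u0) u0).
  - apply (K_restrict K HK A); auto; [intros w Hw; unfold single in Hw; subst w; auto | reflexivity].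
  - apply seteq; intros w; split; [| intros []].
    intros [[v [Hv ->]] Hn]; apply Hn; unfold single in *; subst v; apply vsub_self.
Qed.

(* Axiom C4 for C_K: rejection is inherited by supersets, by upward closure. *)
Lemma CK_rej_mono (K : sdos X) (HK : coherent_K K) A B :
  finite_oset B -> subset A B -> subset (rej (CK K) A) (rej (CK K) B).
Proof.
  intros HB HAB u [HuA HnC]; split; [apply HAB, HuA |]; intros [_ HnK]; apply HnK.
  assert (HKu : K (centred A u)) by (apply NNPP; intros Hn; apply HnC; split; auto).
  eapply K_superset; [exact HK | exact HKu | apply fin_centred, HB |].
  intros w [[v [Hv ->]] Hn]; split; [exists v; split; auto | exact Hn].
Qed.

Lemma CK_coherent (K : sdos X) : coherent_K K -> coherent_choice (CK K).
Proof.
  intros HK; pose proof HK as (_&K0&_&K2&K3&_).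
  split; [| split; [| split; [| split; [| split]]]].
  - intros A _ u [H _]; exact H.
  - apply CK_nonempty, HK.
  - intros A u _ Hu; unfold CK; rewrite shift_vzero; split; intros [_ H]; split; auto.
    exists u; split; [exact Hu | symmetry; apply vsub_self].
  - intros u Hu; apply KC_CK; [apply fin_single |].
    replace (setD (single u) (single vzero)) with (single u); [apply K2, Hu |].
    apply seteq; intros w; unfold setD, single; split; [| tauto].
    intros ->; split; [reflexivity | intros E; apply (proj2 Hu); symmetry; exact E].
  - intros A B l1 l2 [HAf HA'] [HBf HB'] Hl.
    assert (HA : K (setD A (single vzero))) by (apply KC_CK; [| split]; auto).
    assert (HB : K (setD B (single vzero))) by (apply KC_CK; [| split]; auto).
    assert (Hc := K3 _ _ l1 l2 HA HB (fun u v Hu Hv => Hl u v (proj1 Hu) (proj1 Hv))).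
    apply K0 in Hc; apply KC_CK; [apply fin_combo; auto |].
    eapply K_superset; [exact HK | exact Hc | |].
    + apply fin_sub with (combo A B l1 l2); [apply fin_combo; auto | intros w [Hw _]; exact Hw].
    + intros w [(a & b & [Ha _] & [Hb _] & Ew) Hn]; split; [exists a, b |]; auto.
  - intros A B _ HB; apply CK_rej_mono; auto.
Qed.

Lemma KC_coherent (C' : oset X -> oset X) : coherent_choice C' -> coherent_K (KC C').
Proof.
  intros (Hch&C0&_&C2&C3&C4); split; [| split; [| split; [| split; [| split]]]].
  - intros A [H _]; exact H.
  - intros A [HA Hn]; split; [apply fin_sub with A; [exact HA | intros w [Hw _]; exact Hw] |].
    replace (setU (setD A (single vzero)) (single vzero)) with (setU A (single vzero));
      [exact Hn |].
    apply seteq; intros w; unfold setU, setD, single; split; [| tauto].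
    intros [H|H]; [destruct (classic (w = vzero)) |]; auto.
  - intros [_ Hn].
    assert (Hf : finite_oset (setU (single (@vzero X)) (single vzero)))
      by (apply fin_U; apply fin_single).
    destruct (C0 _ Hf) as [v Hv]; [exists vzero; left; reflexivity |].
    destruct (Hch _ Hf v Hv) as [E|E]; unfold single in E; subst v; contradiction.
  - exact C2.
  - exact C3.
  - intros A Q [HA Hn] HQ; split; [apply fin_U; auto |]; intros Hc.
    assert (Hr : rej C' (setU A (single vzero)) vzero) by (split; [right; reflexivity | exact Hn]).
    apply C4 with (B := setU (setU A Q) (single vzero)) in Hr.
    + destruct Hr as [_ Hr]; contradiction.
    + apply fin_U; [exact HA | apply fin_single].
    + apply fin_U; [apply fin_U; auto | apply fin_single].
    + intros w [H|H]; [left; left | right]; auto.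
Qed.

(* By C1, a coherent C' is determined by K_C': u is chosen from A iff
   (A-u)\{0} is not desirable, i.e. C' = C_{K_C'} on finite option sets. *)
Lemma choice_via_KC (C' : oset X -> oset X) : coherent_choice C' ->
  forall A u, finite_oset A -> A u -> (C' A u <-> ~ KC C' (centred A u)).
Proof.
  intros (_&_&C1&_) A u HA Hu; unfold KC.
  replace (setU (centred A u) (single vzero)) with (shift A u).
  - rewrite (C1 A u HA Hu); split.
    + intros H [_ Hn]; contradiction.
    + intros H; apply NNPP; intros Hn; apply H; split; [apply fin_centred |]; auto.
  - apply seteq; intros w; unfold setU, setD, single; split.
    + intros Hw; destruct (classic (w = vzero)); auto.
    + intros [[H _]| ->]; [exact H | exists u; split; [exact Hu | symmetry; apply vsub_self]].
Qed.

(* If a coherent C' lies below C, every element (C(A)-u) of A_C is in K_C':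
   all of A \ C(A) is rejected by C', so u stays rejected from C(A) u {u}. *)
Lemma AC_in_KC (C C' : oset X -> oset X) : choice_fun C -> coherent_choice C' ->
  dominated C' C -> forall B, AC C B -> KC C' B.
Proof.
  intros HchC HC Hdom B (A & u & HA & [HuA HnCu] & ->).
  assert (Hrej : forall w, A w -> ~ C A w -> KC C' (centred A w)).
  { intros w Hw Hn; apply NNPP; intros H.
    apply (choice_via_KC C' HC A w HA Hw) in H; apply Hn, Hdom; auto. }
  replace (shift (C A) u) with (centred (setU (C A) (single u)) u).
  - apply (K_restrict _ (KC_coherent C' HC) A); auto.
    + intros w [Hw|Hw]; [apply HchC; auto | unfold single in Hw; subst w; exact HuA].
    + intros w Hw Hn; apply Hrej; [exact Hw | intros Hc; apply Hn; left; exact Hc].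
    + right; reflexivity.
  - apply seteq; intros w; split.
    + intros [[v [[Hv|Hv] ->]] Hn]; [exists v; auto |].
      exfalso; apply Hn; unfold single in *; subst v; apply vsub_self.
    + intros [v [Hv ->]]; split; [exists v; split; [left |]; auto |].
      intros E; apply vsub_eq0 in E; subst v; contradiction.
Qed.

(* Conversely, if K contains A_C then C_K lies below C: an option u outside
   C(A) is rejected by C_K since (A-u)\{0} contains C(A)-u, which is in K. *)
Lemma CK_dominated (C : oset X -> oset X) (K : sdos X) : choice_fun C -> coherent_K K ->
  (forall B, AC C B -> K B) -> dominated (CK K) C.
Proof.
  intros HchC HK HKA A HA u [HuA HnK]; apply NNPP; intros HnC; apply HnK.
  assert (H : K (shift (C A) u)) by (apply HKA; exists A, u; repeat split; auto).
  eapply K_superset; [exact HK | exact H | apply fin_centred, HA |].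
  intros w [v [Hv ->]]; split; [exists v; split; [apply HchC |]; auto |].
  intros E; apply vsub_eq0 in E; subst v; contradiction.
Qed.

Lemma consistent_iff_AC_coherent (C : oset X -> oset X) : choice_fun C ->
  consistent C <-> exists K, coherent_K K /\ forall B, AC C B -> K B.
Proof.
  intros HchC; split.
  - intros [C' [HC' Hdom]]; exists (KC C'); split;
      [apply KC_coherent | apply AC_in_KC]; assumption.
  - intros [K [HK HKA]]; exists (CK K); split; [apply CK_coherent | apply CK_dominated]; assumption.
Qed.

Lemma ExA_not_mem (Asm : sdos X) B : finite_oset B ->
  ~ ExA Asm B <-> exists K, coherent_K K /\ (forall A, Asm A -> K A) /\ ~ K B.
Proof.
  intros HB; split.
  - intros Hn; apply NNPP; intros Hno; apply Hn; split; [exact HB |].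
    intros K HK HA; apply NNPP; intros HnK; apply Hno; eauto.
  - intros (K & HK & HA & HnK) [_ Hall]; apply HnK, Hall; assumption.
Qed.

End ChoiceAndDesirability.

Theorem theorem4 (X : Type) (hX : inhabited X) (C : oset X -> oset X) :
  choice_fun C ->
  (consistent C <-> ~ ExA (AC C) (empty_oset X)) /\
  (consistent C -> forall A, finite_oset A -> CK (ExA (AC C)) A = ExC C A).
Proof.
  intros HchC; split.
  - (* a coherent K never contains the empty set *)
    rewrite consistent_iff_AC_coherent, (ExA_not_mem X _ _ (fin_empty X)) by exact HchC.
    split.
    + intros (K & HK & HKA); exists K; split; [exact HK | split; [exact HKA | apply (K_no_empty X), HK]].
    + intros (K & HK & HKA & _); eauto.
  - intros _ A HA; apply seteq; intros u; unfold CK.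
    rewrite (ExA_not_mem X _ _ (fin_centred X A u HA)); split.
    + (* the witness K gives the coherent choice function C_K below C *)
      intros [Hu (K & HK & HKA & HnK)].
      exists (CK K); split; [apply (CK_coherent X), HK |].
      split; [apply (CK_dominated X); assumption | split; assumption].
    + (* a coherent C' below C gives the witness K_C' *)
      intros (C' & HC' & Hdom & Hu).
      assert (HuA : A u) by (apply (proj1 HC'); assumption).
      split; [exact HuA |]; exists (KC C').
      split; [apply KC_coherent, HC' | split; [apply AC_in_KC; assumption |]].
      apply (choice_via_KC X C' HC' A u HA HuA), Hu.
Qed.
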